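(* Let $m,n,w,d$ be positive integers with $w\le m$. For all positive integers $a,m',w'$ such that $am'\le m$ and $aw'\le w\le aw'+m-am'$, we have $A(m,n,w,d)\ge A(m',an,w',d)$. Consequently, $$C\left(\left\lfloor\frac{m}{w}\right\rfloor,nw,d\right)\le A(m,n,w,d)\le B(mn,nw,d).$$
   Context: $J(m,w)$ denotes the set of binary vectors of length $m$ and Hamming weight $w$. Elements of $J(m,w)^n$ are identified with $m\times n$ binary matrices all of whose columns have weight $w$, with binary Hamming distance. $A(m,n,w,d)$ is the maximum cardinality of a nonempty subset of $J(m,w)^n$ with pairwise Hamming distances at least $2d$. $B(N,W,d)$ is the maximum cardinality of a nonempty subset of $J(N,W)$ with pairwise Hamming distances at least $2d$. $C(q,n,d)$ is the maximum cardinality of a nonempty subset of $[q]^n$, $[q]=\{0,\dots,q-1\}$, with pairwise Hamming distances at least $d$. *)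

From mathcomp Require Import all_boot all_algebra.
Set Implicit Arguments. Unset Strict Implicit. Unset Printing Implicit Defensive.

(* Maximum cardinality of a NONEMPTY subset S of a finite type satisfying P
   (0 if there is none). *)
Definition maxcard (T : finType) (P : {set T} -> bool) : nat :=
  \max_(S : {set T} | (S != set0) && P S) #|S|.

Definition mdist (m n : nat) (X Y : 'M[bool]_(m, n)) : nat :=
  #|[set ij : 'I_m * 'I_n | X ij.1 ij.2 != Y ij.1 ij.2]|.

Definition colweight (m n w : nat) (X : 'M[bool]_(m, n)) : bool :=
  [forall j : 'I_n, #|[set i : 'I_m | X i j]| == w].

Definition A (m n w d : nat) : nat :=
  maxcard (fun S : {set 'M[bool]_(m, n)} =>
    [forall X in S, colweight w X] &&
    [forall X in S, forall Y in S, (X != Y) ==> (2 * d <= mdist X Y)]).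

Definition vdist (N : nat) (x y : {ffun 'I_N -> bool}) : nat :=
  #|[set i : 'I_N | x i != y i]|.

Definition vweight (N : nat) (x : {ffun 'I_N -> bool}) : nat := #|[set i | x i]|.

Definition B (N W d : nat) : nat :=
  maxcard (fun S : {set {ffun 'I_N -> bool}} =>
    [forall x in S, vweight x == W] &&
    [forall x in S, forall y in S, (x != y) ==> (2 * d <= vdist x y)]).

Definition qdist (q n : nat) (x y : {ffun 'I_n -> 'I_q}) : nat :=
  #|[set i : 'I_n | x i != y i]|.

Definition C (q n d : nat) : nat :=
  maxcard (fun S : {set {ffun 'I_n -> 'I_q}} =>
    [forall x in S, forall y in S, (x != y) ==> (d <= qdist x y)]).

From mathcomp Require Import all_boot all_algebra zify.
Set Implicit Arguments. Unset Strict Implicit. Unset Printing Implicit Defensive.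

(* Each bound is witnessed by an injective map between code spaces that keeps
   words admissible and does not decrease distances.
   For the first bound, cut [X] in [J(m',w')^(an)] into [a] blocks of [n]
   columns and stack them: this is an isometry onto [(am') x n] matrices of
   column weight [aw']. Appending [w - aw'] rows of ones and the remaining
   [m - am' - (w - aw')] rows of zeros is again an isometry, and brings the
   column weight to [w].
   Encoding each letter of a [q]-ary word as a one-hot column doubles
   distances, so [C q N d <= A q N 1 d]; the first bound with [a = w] and
   [w' = 1] then reaches [A m n w d]. Reading the [mn] entries of a matrix as
   one binary vector gives the upper bound. *)

Lemma card_set_sum (T : finType) (P : pred T) : #|[set x | P x]| = \sum_x P x.
Proof. by rewrite -sum1dep_card big_mkcond. Qed.

Lemma sum_mxvec_index m n (F : 'I_(m * n) -> nat) :
  \sum_k F k = \sum_i \sum_j F (mxvec_index i j).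
Proof. by rewrite pair_big (reindex _ (curry_mxvec_bij m n)); apply: eq_bigr => -[]. Qed.

Section MaxcardTransport.

Variables T U : finType.

Lemma maxcard_le_inj (P : {set T} -> bool) (Q : {set U} -> bool) (f : T -> U) :
  injective f -> (forall S, P S -> Q (f @: S)) -> maxcard P <= maxcard Q.
Proof.
move=> f_inj PQ; apply/bigmax_leqP => S /andP[S_n0 PS].
rewrite -(card_imset S f_inj); apply: leq_bigmax_cond.
by rewrite imset_eq0 S_n0 PQ.
Qed.

Lemma forall_in_imset (f : T -> U) (S : {set T}) (p : pred U) :
  [forall y in f @: S, p y] = [forall x in S, p (f x)].
Proof.
apply/forall_inP/forall_inP => [p_fS x xS | p_S _ /imsetP[x xS ->]].
  exact/p_fS/imset_f.
exact: p_S.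
Qed.

Lemma pairwise_imset (f : T -> U) (S : {set T}) (r : rel U) :
  injective f ->
  [forall x in f @: S, forall y in f @: S, (x != y) ==> r x y] =
  [forall x in S, forall y in S, (x != y) ==> r (f x) (f y)].
Proof.
move=> f_inj; rewrite forall_in_imset; apply: eq_forallb_in => x _.
by rewrite forall_in_imset; apply: eq_forallb_in => y _; rewrite (inj_eq f_inj).
Qed.

End MaxcardTransport.

Lemma mdistE m n (X Y : 'M[bool]_(m, n)) :
  mdist X Y = \sum_i \sum_j (X i j != Y i j).
Proof. by rewrite /mdist card_set_sum pair_big. Qed.

Lemma mdist_eq0 m n (X Y : 'M[bool]_(m, n)) : (mdist X Y == 0) = (X == Y).
Proof.
rewrite /mdist cards_eq0; apply/eqP/eqP => [XY | ->]; last first.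
  by apply/setP => ij; rewrite !inE eqxx.
apply/matrixP => i j; apply/eqP/negP => /negP XYij.
by have := in_set0 (i, j); rewrite -XY inE XYij.
Qed.

Lemma colweightP m n w (X : 'M[bool]_(m, n)) :
  reflect (forall j, \sum_i X i j = w) (colweight w X).
Proof.
apply: (iffP forallP) => wX j; last by rewrite card_set_sum wX.
by rewrite -card_set_sum; apply/eqP.
Qed.

Lemma A_le_isometry m n w m2 n2 w2 d (f : 'M[bool]_(m, n) -> 'M[bool]_(m2, n2)) :
  (forall X Y, mdist (f X) (f Y) = mdist X Y) ->
  (forall X, colweight w X -> colweight w2 (f X)) ->
  A m n w d <= A m2 n2 w2 d.
Proof.
move=> f_dist f_weight.
have f_inj : injective f by move=> X Y /eqP; rewrite -mdist_eq0 f_dist mdist_eq0 => /eqP.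
apply: (maxcard_le_inj f_inj) => S /andP[wS dS].
rewrite forall_in_imset (pairwise_imset _ _ f_inj); apply/andP; split.
  by apply/forall_inP => X /(forall_inP wS)/f_weight.
apply/forall_inP => X XS; apply/forall_inP => Y YS.
by rewrite f_dist; apply: (forall_inP (forall_inP dS X XS)).
Qed.

Section StackBlocks.

Variables a m n : nat.

(* Block [q] of [X] consists of the columns [mxvec_index q j]; it becomes the
   rows [mxvec_index q r] of [stack_blocks X]. *)
Definition stack_blocks (X : 'M[bool]_(m, a * n)) : 'M[bool]_(a * m, n) :=
  \matrix_(i, j) mxvec (\matrix_(q < a, r < m) X r (mxvec_index q j)) 0%R i.

Lemma stack_blocksE X q r j :
  stack_blocks X (mxvec_index q r) j = X r (mxvec_index q j).
Proof. by rewrite mxE mxvecE mxE. Qed.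

Lemma mdist_stack_blocks X Y : mdist (stack_blocks X) (stack_blocks Y) = mdist X Y.
Proof.
rewrite !mdistE sum_mxvec_index exchange_big; apply: eq_bigr => r _.
rewrite [RHS]sum_mxvec_index; apply: eq_bigr => q _.
by apply: eq_bigr => j _; rewrite !stack_blocksE.
Qed.

Lemma colweight_stack_blocks w X : colweight w X -> colweight (a * w) (stack_blocks X).
Proof.
move/colweightP => wX; apply/colweightP => j.
rewrite sum_mxvec_index (eq_bigr (fun=> w)) ?sum_nat_const ?card_ord // => q _.
by rewrite -(wX (mxvec_index q j)); apply: eq_bigr => r _; rewrite stack_blocksE.
Qed.

End StackBlocks.

Lemma A_stack_blocks a m n w d : A m (a * n) w d <= A (a * m) n (a * w) d.
Proof.
exact: A_le_isometry (@mdist_stack_blocks a m n) (@colweight_stack_blocks a m n w).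
Qed.

Lemma A_pad_const k l n v d (b : bool) : A k n v d <= A (k + l) n (v + l * b) d.
Proof.
pose pad (X : 'M[bool]_(k, n)) := col_mx X (const_mx b : 'M_(l, n)).
apply: (@A_le_isometry _ _ _ _ _ _ _ pad) => [X Y | X /colweightP wX].
  rewrite !mdistE big_split_ord /=.
  under [X in _ + X]eq_bigr do under eq_bigr do rewrite !col_mxEd !mxE eqxx.
  under eq_bigr do under eq_bigr do rewrite !col_mxEu.
  by rewrite !big1_eq addn0.
apply/colweightP => j; rewrite big_split_ord /=.
under eq_bigr do rewrite col_mxEu; under [X in _ + X]eq_bigr do rewrite col_mxEd mxE.
by rewrite wX sum_nat_const card_ord.
Qed.

Lemma A_le_block_embedding a m m' n w w' d :
  a * m' <= m -> a * w' <= w -> w <= a * w' + (m - a * m') ->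
  A m' (a * n) w' d <= A m n w d.
Proof.
move=> le_am'_m le_aw'_w le_w.
have [u [z [-> ->]]] : exists u z, m = a * m' + u + z /\ w = a * w' + u * true + z * false.
  by exists (w - a * w'), (m - a * m' - (w - a * w')); rewrite muln1 muln0; lia.
apply: leq_trans (A_stack_blocks _ _ _ _ _) _.
exact: leq_trans (A_pad_const _ _ _ _ _ true) (A_pad_const _ _ _ _ _ false).
Qed.

Section OneHot.

Variables q N : nat.

Definition onehot (x : {ffun 'I_N -> 'I_q}) : 'M[bool]_(q, N) :=
  \matrix_(i, j) (x j == i).

Lemma onehot_inj : injective onehot.
Proof.
move=> x y /matrixP xy; apply/ffunP => j.
by have := xy (x j) j; rewrite !mxE eqxx => /esym/eqP.
Qed.

Lemma colweight_onehot x : colweight 1 (onehot x).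
Proof.
apply/colweightP => j; rewrite (bigD1 (x j)) //= mxE eqxx big1 // => i.
by rewrite mxE eq_sym => /negbTE ->.
Qed.

Lemma mdist_onehot x y : mdist (onehot x) (onehot y) = 2 * qdist x y.
Proof.
rewrite mdistE exchange_big /qdist card_set_sum big_distrr; apply: eq_bigr => j _ /=.
have [xy | xy] := eqVneq (x j) (y j).
  by rewrite muln0 big1 // => i _; rewrite !mxE xy eqxx.
rewrite muln1 -card_set_sum (_ : 2 = #|[set x j; y j]|); last by rewrite cards2 xy.
apply: eq_card => i; rewrite !inE !mxE ![_ == i]eq_sym.
have [-> | _] := eqVneq i (x j); first by rewrite (negbTE xy).
by case: (i == y j).
Qed.

End OneHot.

Lemma C_le_A1 q N d : C q N d <= A q N 1 d.
Proof.
apply: (maxcard_le_inj (@onehot_inj q N)) => S dS.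
rewrite forall_in_imset (pairwise_imset _ _ (@onehot_inj q N)); apply/andP; split.
  by apply/forall_inP => x _; apply: colweight_onehot.
apply/forall_inP => x xS; apply/forall_inP => y yS; apply/implyP => xy.
by rewrite mdist_onehot leq_mul2l (implyP (forall_inP (forall_inP dS x xS) y yS)).
Qed.

Section Flatten.

Variables m n : nat.

Definition flat_mx (X : 'M[bool]_(m, n)) : {ffun 'I_(m * n) -> bool} :=
  [ffun k => mxvec X 0%R k].

Lemma flat_mx_inj : injective flat_mx.
Proof.
move=> X Y /ffunP XY; apply: (can_inj mxvecK); apply/rowP => k.
by have := XY k; rewrite !ffunE.
Qed.

Lemma vdist_flat_mx X Y : vdist (flat_mx X) (flat_mx Y) = mdist X Y.
Proof.
rewrite /vdist card_set_sum sum_mxvec_index mdistE.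
by apply: eq_bigr => i _; apply: eq_bigr => j _; rewrite !ffunE !mxvecE.
Qed.

Lemma vweight_flat_mx w X : colweight w X -> vweight (flat_mx X) = n * w.
Proof.
move/colweightP => wX; rewrite /vweight card_set_sum sum_mxvec_index exchange_big.
rewrite (eq_bigr (fun=> w)) ?sum_nat_const ?card_ord // => j _.
by rewrite -(wX j); apply: eq_bigr => i _; rewrite ffunE mxvecE.
Qed.

End Flatten.

Lemma A_le_B m n w d : A m n w d <= B (m * n) (n * w) d.
Proof.
apply: (maxcard_le_inj (@flat_mx_inj m n)) => S /andP[wS dS].
rewrite forall_in_imset (pairwise_imset _ _ (@flat_mx_inj m n)); apply/andP; split.
  by apply/forall_inP => X /(forall_inP wS) /vweight_flat_mx ->.
apply/forall_inP => X XS; apply/forall_inP => Y YS.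
by rewrite vdist_flat_mx; apply: (forall_inP (forall_inP dS X XS)).
Qed.

Theorem proposition6 (m n w d : nat) :
  0 < m -> 0 < n -> 0 < w -> 0 < d -> w <= m ->
  (forall a m' w' : nat, 0 < a -> 0 < m' -> 0 < w' ->
     a * m' <= m -> a * w' <= w -> w <= a * w' + (m - a * m') ->
     A m' (a * n) w' d <= A m n w d)
  /\ C (m %/ w) (n * w) d <= A m n w d
  /\ A m n w d <= B (m * n) (n * w) d.
Proof.
move=> _ _ _ _ _; split; last split; last exact: A_le_B.
  by move=> a m' w' _ _ _; apply: A_le_block_embedding.
apply: leq_trans (C_le_A1 _ _ _) _; rewrite mulnC.
apply: A_le_block_embedding; rewrite ?muln1 ?leq_addr //.
by rewrite mulnC leq_divM.
Qed.
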